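(* Let $G$ be a graph and $\ell\ge 2$. Then $\overline{G\cup K_1}$ is $N$-AW if and only if $G$ is $A$-AW.
   Context: All graphs are finite and simple; $\overline{H}$ is the complement of $H$ and $G\cup K_1$ is the disjoint union of $G$ with a single new vertex. Labels lie in $\mathbb{Z}_\ell$. In the neighborhood Lights Out game, toggling a vertex $v$ adds $1$ (mod $\ell$) to the label of every vertex of the closed neighborhood $N[v]$; in the adjacency Lights Out game, toggling $v$ adds $1$ to the label of every vertex of the open neighborhood $N(v)$ (and not to $v$ itself). A game is won when all labels are $0$. A graph is $N$-AW (resp. $A$-AW) if the neighborhood (resp. adjacency) game can be won from every initial labeling $V\to\mathbb{Z}_\ell$; equivalently $A+I$ (resp. the adjacency matrix $A$) is invertible over $\mathbb{Z}_\ell$. *)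

From mathcomp Require Import all_boot all_order all_algebra.
Set Implicit Arguments. Unset Strict Implicit. Unset Printing Implicit Defensive.
Import GRing.Theory.
Local Open Scope ring_scope.

Definition simple_graph (T : finType) (e : rel T) : Prop :=
  symmetric e /\ irreflexive e.

Definition compl_graph (T : finType) (e : rel T) : rel T :=
  fun x y => (x != y) && ~~ e x y.

Definition union_K1 (T : finType) (e : rel T) : rel (option T) :=
  fun x y => match x, y with
             | Some u, Some v => e u v
             | _, _ => false
             end.

(* Neighborhood Lights Out: toggling v adds 1 to every vertex of N[v]. *)
Definition toggleN (l : nat) (T : finType) (e : rel T)
  (f : T -> 'Z_l) (v : T) : T -> 'Z_l :=
  fun w => f w + ((w == v) || e v w)%:R.

(* Adjacency Lights Out: toggling v adds 1 to every vertex of N(v). *)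
Definition toggleA (l : nat) (T : finType) (e : rel T)
  (f : T -> 'Z_l) (v : T) : T -> 'Z_l :=
  fun w => f w + (e v w)%:R.

Definition playN l (T : finType) (e : rel T) (s : seq T) (f : T -> 'Z_l) :=
  foldl (@toggleN l T e) f s.
Definition playA l (T : finType) (e : rel T) (s : seq T) (f : T -> 'Z_l) :=
  foldl (@toggleA l T e) f s.

Definition N_AW (l : nat) (T : finType) (e : rel T) : Prop :=
  forall f : T -> 'Z_l, exists s : seq T, forall w, playN e s f w = 0.
Definition A_AW (l : nat) (T : finType) (e : rel T) : Prop :=
  forall f : T -> 'Z_l, exists s : seq T, forall w, playA e s f w = 0.

From mathcomp Require Import all_boot all_order all_algebra.
From Stdlib Require Import Setoid.
Set Implicit Arguments. Unset Strict Implicit. Unset Printing Implicit Defensive.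
Import GRing.Theory.
Local Open Scope ring_scope.

(* Moves of both games commute and each vertex acts by adding a fixed vector,
   so a play only matters through how often each vertex is toggled, modulo l:
   a game is always winnable iff its move vectors span 'Z_l^V.  In the
   complement of G ∪ K_1 the new vertex has the all-ones closed neighbourhood
   and an old vertex u has 1 - A_u (irreflexivity puts u into N[u]).
   Subtracting the all-ones vector leaves the rows -A_u, so the closed
   neighbourhoods span iff the rows of A do. *)

Definition lincomb_surj (R : pzRingType) (T : finType) (g : T -> T -> R) :=
  forall b : T -> R, exists y : T -> R, forall w, \sum_v y v * g v w = b w.

Lemma eq_lincomb_surj (R : pzRingType) (T : finType) (g g' : T -> T -> R) :
  g =2 g' -> lincomb_surj g <-> lincomb_surj g'.
Proof.
move=> eq_g; split=> surj b; have [y Hy] := surj b; exists y => w;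
  by rewrite -Hy; apply: eq_bigr => v _; rewrite eq_g.
Qed.

Lemma big_seq_count (R : nmodType) (T : finType) (s : seq T) (F : T -> R) :
  \sum_(x <- s) F x = \sum_v F v *+ count_mem v s.
Proof.
elim: s => [|x s IH]; first by rewrite big_nil big1 // => v _; rewrite mulr0n.
rewrite big_cons IH /=; under [RHS]eq_bigr do rewrite mulrnDr mulrb.
by rewrite big_split /= -big_mkcond (big_pred1 x) // => v; rewrite eq_sym.
Qed.

Lemma count_mem_flatten_nseq (T : finType) (c : T -> nat) (v : T) :
  count_mem v (flatten [seq nseq (c u) u | u <- enum T]) = c v.
Proof.
rewrite count_flatten -map_comp sumnE big_map big_enum /=.
under eq_bigr do rewrite count_nseq.
by rewrite (bigD1 v) //= eqxx mul1n big1 ?addn0 // => u /negbTE->.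
Qed.

Section AdditiveGame.

Variables (l : nat) (T : finType) (g : T -> T -> 'Z_l).
Variable toggle : (T -> 'Z_l) -> T -> T -> 'Z_l.
Hypothesis toggleE : forall f v w, toggle f v w = f w + g v w.

Lemma foldl_toggle f s w : foldl toggle f s w = f w + \sum_(x <- s) g x w.
Proof.
elim: s f => [|x s IH] f /=; first by rewrite big_nil addr0.
by rewrite IH toggleE big_cons addrA.
Qed.

Lemma always_winnable_lincomb_surj :
  (forall f, exists s, forall w, foldl toggle f s w = 0) <-> lincomb_surj g.
Proof.
split=> win b.
  have [s Hs] := win (fun w => - b w).
  exists (fun v => (count_mem v s)%:R) => w.
  under eq_bigr do rewrite mulr_natl.
  rewrite -big_seq_count; have /eqP := Hs w.
  by rewrite foldl_toggle addrC addr_eq0 opprK => /eqP.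
have [y Hy] := win (fun w => - b w).
exists (flatten [seq nseq (y u : nat) u | u <- enum T]) => w.
rewrite foldl_toggle big_seq_count.
under eq_bigr do rewrite count_mem_flatten_nseq -mulr_natl natr_Zp.
by rewrite Hy addrN.
Qed.

End AdditiveGame.

Lemma N_AW_lincomb_surj l (T : finType) (e : rel T) :
  N_AW l e <-> lincomb_surj (fun v w => ((w == v) || e v w)%:R : 'Z_l).
Proof. exact: always_winnable_lincomb_surj. Qed.

Lemma A_AW_lincomb_surj l (T : finType) (e : rel T) :
  A_AW l e <-> lincomb_surj (fun v w => (e v w)%:R : 'Z_l).
Proof. exact: always_winnable_lincomb_surj. Qed.

Lemma big_option (R : Type) (idx : R) (op : Monoid.com_law idx) (T : finType)
    (F : option T -> R) :
  \big[op/idx]_(x : option T) F x = op (F None) (\big[op/idx]_(u : T) F (Some u)).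
Proof.
rewrite (bigD1 None) //=; congr (op _ _).
rewrite (reindex_omap Some id) /=; last by case.
by apply: eq_bigl => u; rewrite eqxx.
Qed.

Section Cone.

Variables (R : pzRingType) (T : finType) (a : T -> T -> R).

Definition cone_mx : option T -> option T -> R :=
  fun x y => if (x, y) is (Some u, Some w) then 1 - a u w else 1.

Lemma cone_mx_lincomb_None (y : option T -> R) :
  \sum_x y x * cone_mx x None = \sum_x y x.
Proof. by apply: eq_bigr => -[u|] _; rewrite mulr1. Qed.

Lemma cone_mx_lincomb_Some (y : option T -> R) w :
  \sum_x y x * cone_mx x (Some w) = \sum_x y x - \sum_u y (Some u) * a u w.
Proof.
rewrite !big_option /= mulr1 -addrA; congr (_ + _).
by rewrite -sumrB; apply: eq_bigr => u _; rewrite mulrBr mulr1.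
Qed.

Lemma lincomb_surj_cone : lincomb_surj cone_mx <-> lincomb_surj a.
Proof.
split=> surj b.
  have [y Hy] := surj (fun x => if x is Some w then - b w else 0).
  have sum_y : \sum_x y x = 0 by rewrite -cone_mx_lincomb_None Hy.
  exists (fun u => y (Some u)) => w.
  by have := Hy (Some w); rewrite cone_mx_lincomb_Some sum_y sub0r => /oppr_inj.
have [z Hz] := surj (fun w => b None - b (Some w)).
pose y x := if x is Some u then z u else b None - \sum_u z u.
have sum_y : \sum_x y x = b None by rewrite big_option /= subrK.
exists y => -[w|]; rewrite ?cone_mx_lincomb_Some ?cone_mx_lincomb_None sum_y //.
by rewrite Hz subKr.
Qed.

End Cone.

Lemma closed_nbhd_compl_union_K1 (R : pzRingType) (T : finType) (e : rel T) :
  irreflexive e ->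
  (fun v w => ((w == v) || compl_graph (union_K1 e) v w)%:R : R)
  =2 cone_mx (fun u w => (e u w)%:R).
Proof.
move=> irr_e [u|] [w|] //=; rewrite /cone_mx /compl_graph /= !(inj_eq Some_inj).
have [->|_] := eqVneq w u; first by rewrite irr_e subr0.
by case: (e u w); rewrite ?subrr ?subr0.
Qed.

Theorem theorem2p6 (l : nat) (T : finType) (e : rel T) :
  (1 < l)%N -> simple_graph e ->
  (N_AW l (compl_graph (union_K1 e)) <-> A_AW l e).
Proof.
move=> _ [_ irr_e].
rewrite N_AW_lincomb_surj A_AW_lincomb_surj.
rewrite (eq_lincomb_surj (closed_nbhd_compl_union_K1 _ irr_e)).
exact: lincomb_surj_cone.
Qed.
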